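(* Let $r\ne p$ be primes and $H$ a finite group with $\pi(H)=\{r,p\}$ such that $r-p\in\overline{\Gamma}(H)$. Then $H$ is either a Frobenius group or a $2$-Frobenius group. Moreover: (1) if $H$ has a nontrivial normal $p$-subgroup, then $H$ is Frobenius of type $(r,p)$ or $2$-Frobenius of type $(p,r,p)$; (2) if there is $N\unlhd H$ with $H/N$ a nontrivial $r$-group, then $H$ is Frobenius of type $(r,p)$ or $2$-Frobenius of type $(r,p,r)$; (3) if both hypotheses of (1) and (2) hold, then $H$ is Frobenius of type $(r,p)$.
   Context: $\overline{\Gamma}(H)$ is the graph on the prime divisors of $|H|$ where distinct $p,q$ are adjacent iff $H$ has no element of order $pq$. A group $G$ is $2$-Frobenius if there is a normal series $1\unlhd F_1\unlhd F_2\unlhd G$ such that $G/F_1$ is a Frobenius group with kernel $F_2/F_1$ and $F_2$ is a Frobenius group with kernel $F_1$; $G/F_1$ and $F_2$ are the upper and lower Frobenius groups. A Frobenius group is of type $(p,q)$ if its complement is a $p$-group and its kernel a $q$-group; a $2$-Frobenius group is of type $(p,q,r)$ if its upper Frobenius group is of type $(p,q)$ and its lower Frobenius group is of type $(q,r)$. *)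

From mathcomp Require Import all_boot fingroup morphism quotient pgroup frobenius.
Set Implicit Arguments.
Unset Strict Implicit.
Unset Printing Implicit Defensive.
Local Open Scope group_scope.

(* Adjacency of distinct primes p, q in the complement prime graph
   \overline{Gamma}(H): both divide |H|, p <> q, and H has no element of
   order p*q. *)
Definition cpg_adj (gT : finGroupType) (H : {set gT}) (p q : nat) : Prop :=
  [/\ p \in \pi(#|H|), q \in \pi(#|H|), p != q &
      ~ (exists2 x, x \in H & #[x] = (p * q)%N)].

Definition Frobenius_of_type (gT : finGroupType) (G : {set gT}) (p q : nat) : Prop :=
  exists K U : {group gT}, [/\ [Frobenius G = K ><| U], p.-group U & q.-group K].

Definition two_Frobenius (gT : finGroupType) (G : {group gT}) : Prop :=
  exists F1 F2 : {group gT},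
    [/\ F1 <| G, F2 <| G,
        [Frobenius (G / F1) with kernel (F2 / F1)] &
        [Frobenius F2 with kernel F1]].

Definition two_Frobenius_of_type (gT : finGroupType) (G : {group gT})
    (p q r : nat) : Prop :=
  exists F1 F2 : {group gT},
    [/\ F1 <| G, F2 <| G,
        exists U : {group coset_of F1},
          [/\ [Frobenius (G / F1) = (F2 / F1) ><| U], p.-group U
            & q.-group (F2 / F1)] &
        exists W : {group gT},
          [/\ [Frobenius F2 = F1 ><| W], q.-group W & r.-group F1]].

From mathcomp Require Import all_boot fingroup morphism quotient pgroup frobenius.
From mathcomp Require Import all_fingroup all_solvable.
From mathcomp Require Import ssralg zify.
From mathcomp Require Import integral_char.
Set Implicit Arguments.
Unset Strict Implicit.
Unset Printing Implicit Defensive.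
Local Open Scope group_scope.
Import GRing.Theory.

(* H is solvable by Burnside's p^a q^b theorem, so one of O_p(H), O_r(H) is
   nontrivial; call its prime b and the other prime a. Since H has no element
   of order ab, commuting a- and b-subgroups of H cannot both be nontrivial,
   so each acts fixed-point-freely on the other. Hence, with P = O_b(H),
   K = O_{b,a}(H) = P ><| R is Frobenius and, by the Frattini argument,
   H = P ><| L with L = N_H(R). A noncyclic abelian a-group cannot act
   fixed-point-freely on Z(P), so Z(R) is cyclic and L' centralizes it; this
   makes R a normal Sylow subgroup of L. Either L = R and H = K is Frobenius
   of type (a,b), or L = R ><| S is Frobenius, L is isomorphic to H/P, and H
   is 2-Frobenius of type (b,a,b). Parts (1)-(3) follow because a normal
   subgroup containing a Frobenius complement contains the whole group, so
   these groups have no nontrivial quotient of the other prime order. *)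

Lemma sum_abelem_cycles (gT : finGroupType) (M : nmodType) (E : {group gT})
    (a : nat) (g : gT -> M) :
    a.-abelem E ->
  (\sum_(F in [set <[e]> | e in E^#]) \sum_(f in F) g f =
   g 1%g *+ #|[set <[e]> | e in E^#]| + \sum_(f in E^#) g f)%R.
Proof.
move=> abE; set FF := [set <[e]> | e in E^#].
rewrite (eq_bigr (fun F => g 1%g + \sum_(f in F^#) g f)%R); last first.
  move=> _ /imsetP[e Ee ->]; rewrite (bigD1 1) ?group1 //=; congr (_ + _)%R.
  by apply: eq_bigl => f; rewrite !inE andbC.
rewrite big_split sumr_const /=; congr (_ + _)%R.
rewrite [RHS](partition_big (fun f => <[f]>) (mem FF)) /=; last first.
  by move=> f Ef; apply: imset_f.
apply: eq_bigr => _ /imsetP[e /setD1P[nte Ee] ->].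
apply: eq_bigl => f; rewrite [RHS]andbC !inE.
have [-> | ntf] /= := eqVneq f 1; first by rewrite andbF.
apply/idP/andP => [ef | [/eqP <- _]]; last exact: cycle_id.
have Ef : f \in E by apply: subsetP ef; rewrite cycle_subG.
split=> //; rewrite eqEcard cycle_subG ef /= -!orderE.
by rewrite (abelem_order_p abE Ef ntf) (abelem_order_p abE Ee nte).
Qed.

Import FiniteModule.

(* Writing V additively, the sum of u over each cyclic subgroup F of E is
   fixed by F, hence 0 by semiregularity, and likewise for the sum over E.
   As E^# is the disjoint union of the a + 1 sets F^#, the sum over all F
   equals a u + (sum over E), whence a u = 0 and u = 0 by coprimality. *)
Lemma abelem2_semiregular_trivg (gT : finGroupType) (V E : {group gT}) (a : nat) :
    prime a -> abelian V -> E \subset 'N(V) -> coprime #|V| a ->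
    a.-abelem E -> #|E| = (a ^ 2)%N -> semiregular V E ->
  V :=: 1.
Proof.
move=> pr_a abV nVE coVa abE oE regE.
have a_gt1 := prime_gt1 pr_a.
have oE1 : #|E^#| = (a ^ 2).-1 by rewrite -oE (cardsD1 1 E) group1.
have sum_fixed (F : {group gT}) f0 (u : fmod_of abV) :
    F \subset E -> f0 \in F^# -> (\sum_(f in F) u ^@ f = 0)%R.
  move=> sFE /setD1P[ntf0 Ff0]; set s := (\sum_(f in F) u ^@ f)%R.
  have Nf0 : f0 \in 'N(V) by apply: subsetP nVE _ (subsetP sFE _ Ff0).
  have sJ : (s ^@ f0 = s)%R.
    rewrite /s actr_sum [RHS](reindex_inj (mulIg f0)) /=.
    apply: eq_big => [f | f Ff]; first by rewrite groupMr.
    by rewrite actrM // (subsetP nVE) // (subsetP sFE).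
  apply: val_inj; rewrite fmval0 /=.
  have : val s \in 'C_V[f0].
    rewrite inE fmodP /=; apply/cent1P/commgP/conjg_fixP.
    by rewrite -fmvalJ // sJ.
  rewrite (regE f0); first by move/set1P.
  by rewrite !inE ntf0 (subsetP sFE).
set FF := [set <[e]> | e in E^#].
have cardFF : #|FF| = a.+1.
  have := sum_abelem_cycles (M := nat) (fun _ => 1%N) abE; rewrite -/FF.
  rewrite (eq_bigr (fun _ => a)); last first.
    move=> _ /imsetP[e /setD1P[nte Ee] ->]; rewrite sumr_const.
    by rewrite -orderE (abelem_order_p abE Ee nte) /= natn.
  rewrite !sumr_const /= !natn -mulr_natr natn /= oE1.
  move: #|FF| => n; rewrite expnS expn1; nia.
have [e Ee] : exists e, e \in E^#.
  by apply/card_gt0P; rewrite oE1 expnS expn1; nia.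
suff a_u0 (u : fmod_of abV) : (u *+ a = 0)%R.
  apply/trivgP/subsetP => x Vx; rewrite inE.
  have := congr1 fmval (a_u0 (fmod abV x)); rewrite fmvalZ fmval0 fmodK // => h.
  by rewrite -(expgK coVa Vx) h expg1n.
have := sum_abelem_cycles (fun f => u ^@ f)%R abE; rewrite -/FF cardFF.
rewrite big1 => [|_ /imsetP[e' /setD1P[nte' Ee'] ->]]; last first.
  by apply: (sum_fixed _ e'); rewrite ?cycle_subG // !inE nte' cycle_id.
have := sum_fixed E e u (subxx E) Ee; rewrite (bigD1 1) ?group1 //= actr1.
have -> : (\sum_(f in E | f != 1%g) u ^@ f = \sum_(f in E^#) u ^@ f)%R.
  by apply: eq_bigl => f; rewrite !inE andbC.
by move=> sum0; rewrite mulrSr -addrA sum0 addr0.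
Qed.

Section NoMixedElements.

Variables (gT : finGroupType) (H : {group gT}) (a b : nat).
Hypotheses (pr_a : prime a) (pr_b : prime b) (neq_ab : a != b).
Hypothesis not_ab_order : {in H, forall x, #[x] != (a * b)%N}.

Lemma cent_pgroups_trivg (X Y : {group gT}) :
    X \subset H -> Y \subset H -> a.-group X -> b.-group Y ->
  X \subset 'C(Y) -> X :=: 1 \/ Y :=: 1.
Proof.
move=> sXH sYH aX bY cXY.
have [-> | ntX] := eqsVneq X 1; first by left.
have [-> | ntY] := eqsVneq Y 1; first by right.
have [_ /(Cauchy pr_a)[x Xx ox] _] := pgroup_pdiv aX ntX.
have [_ /(Cauchy pr_b)[y Yy oy] _] := pgroup_pdiv bY ntY.
have cxy : commute x y by apply: (centP (subsetP cXY x Xx)).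
have := not_ab_order (groupM (subsetP sXH x Xx) (subsetP sYH y Yy)).
by rewrite orderM // ?ox ?oy ?eqxx // prime_coprime // dvdn_prime2.
Qed.

Lemma pgroups_semiregular (X Y : {group gT}) :
  X \subset H -> Y \subset H -> a.-group X -> b.-group Y -> semiregular X Y.
Proof.
move=> sXH sYH aX bY y /setD1P[nty Yy].
have sCX : 'C_X[y] \subset X := subsetIl _ _.
have bYy : b.-group <[y]> by apply: pgroupS bY; rewrite cycle_subG.
have Hy : <[y]> \subset H by rewrite cycle_subG (subsetP sYH).
have cCy : 'C_X[y] \subset 'C(<[y]>) by rewrite cent_cycle subsetIr.
case: (cent_pgroups_trivg (subset_trans sCX sXH) Hy (pgroupS sCX aX) bYy cCy)
  => // /eqP; rewrite cycle_eq1 => y1.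
by rewrite y1 in nty.
Qed.

Lemma abelian_norm_pgroup_cyclic (A P : {group gT}) :
    A \subset H -> P \subset H -> abelian A -> a.-group A -> b.-group P ->
  P :!=: 1 -> A \subset 'N(P) -> cyclic A.
Proof.
move=> sAH sPH abA aA bP ntP nPA; apply: contraR ntP => ncycA.
have : 1 < 'r_a(A) by rewrite -(rank_pgroup aA) ltnNge -abelian_rank1_cyclic.
case/p_rank_geP => E /pnElemP[sEA abE logE].
have oE : #|E| = (a ^ 2)%N by rewrite (card_pgroup (abelem_pgroup abE)) logE.
have sZP : 'Z(P) \subset P := center_sub P.
have bZ : b.-group 'Z(P) := pgroupS sZP bP.
apply/eqP/(trivg_center_pgroup bP).
apply: (abelem2_semiregular_trivg pr_a (center_abelian P) _ _ abE oE).
- exact: char_norm_trans (center_char P) (subset_trans sEA nPA).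
- by rewrite (pnat_coprime bZ) // pnatE // inE eq_sym.
apply/semiregular_sym/pgroups_semiregular => //.
- exact: subset_trans sEA sAH.
- exact: subset_trans sZP sPH.
- exact: pgroupS sEA aA.
Qed.

End NoMixedElements.

Lemma Frobenius_compl_sub_normal (gT : finGroupType) (G K U N : {group gT}) :
  [Frobenius G = K ><| U] -> solvable K -> N <| G -> U \subset N -> G \subset N.
Proof.
move=> frobG solK nsNG sUN.
have [defG _ _ _ _] := Frobenius_context frobG.
have [nsKG sUG defKU nKU _] := sdprod_context defG.
have [sKG _] := andP nsKG; have nNG := normal_norm nsNG.
have nsMG : K :&: N <| G by apply: normalI.
have nMG := normal_norm nsMG.
have sKUM : [~: K, U] \subset K :&: N.
  rewrite subsetI commg_subl nKU /= (subset_trans (commgS K sUN)) //.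
  by rewrite commg_subr (subset_trans sKG).
have coMU : coprime #|K :&: N| #|U|.
  exact: coprimeSg (subsetIl K N) (Frobenius_coprime frobG).
have := coprime_norm_quotient_cent nKU (subset_trans sUG nMG) coMU
  (solvableS (subsetIl K N) solK).
rewrite (Frobenius_trivg_cent frobG) quotient1 (setIidPl (quotient_cents2r sKUM)).
move/esym/eqP; rewrite -subG1 quotient_sub1 ?(subset_trans sKG nMG) // => sKM.
by rewrite -defKU mulG_subG sUN (subset_trans sKM (subsetIr K N)).
Qed.

Lemma pgroup_sub_normal (gT : finGroupType) (G N X : {group gT}) (p : nat) :
  N <| G -> p^'.-group (G / N) -> X \subset G -> p.-group X -> X \subset N.
Proof.
move=> nsNG p'GN sXG pX; have nNX := subset_trans sXG (normal_norm nsNG).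
rewrite -quotient_sub1 // subG1 trivg_card1.
apply/eqP/(pnat_1 (quotient_pgroup N pX)).
exact: pgroupS (quotientS N sXG) p'GN.
Qed.

Lemma Frobenius_of_type_p'quotient (gT : finGroupType) (G N : {group gT})
    (p q : nat) :
  Frobenius_of_type G p q -> N <| G -> p^'.-group (G / N) -> G / N = 1.
Proof.
move=> [K [U [frobG pU qK]]] nsNG p'GN.
have [defG _ _ _ _] := Frobenius_context frobG.
have [_ sUG _ _ _] := sdprod_context defG.
have sUN := pgroup_sub_normal nsNG p'GN sUG pU.
have sGN := Frobenius_compl_sub_normal frobG (pgroup_sol qK) nsNG sUN.
by apply/trivgP; rewrite quotient_sub1 ?normal_norm.
Qed.

Lemma two_Frobenius_of_type_p'quotient (gT : finGroupType) (G N : {group gT})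
    (p q : nat) :
  two_Frobenius_of_type G p q p -> N <| G -> p^'.-group (G / N) -> G / N = 1.
Proof.
move=> [F1 [F2 [nsF1G _ [U [frobGb pU qF21]] [_ [_ _ pF1]]]]] nsNG p'GN.
have [sF1G nF1G] := andP nsF1G.
have sF1N := pgroup_sub_normal nsNG p'GN sF1G pF1.
have [defGb _ _ _ _] := Frobenius_context frobGb.
have [_ sUGb _ _ _] := sdprod_context defGb.
have sUNF1 : U \subset coset F1 @* 'N(F1) by apply: subset_trans sUGb (morphimS _ _).
have sU1G : coset F1 @*^-1 U \subset G by rewrite -(quotientGK nsF1G) morphpreS.
have pU1 : p.-group (coset F1 @*^-1 U).
  by rewrite /pgroup card_morphpre // ker_coset pnatM; apply/andP.
have sU1N := pgroup_sub_normal nsNG p'GN sU1G pU1.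
have sUN : U \subset N / F1 by rewrite -(morphpreK sUNF1) morphimS.
have := Frobenius_compl_sub_normal frobGb (pgroup_sol qF21)
  (quotient_normal F1 nsNG) sUN.
rewrite quotientSGK // => sGN.
by apply/trivgP; rewrite quotient_sub1 ?normal_norm.
Qed.

Lemma solvable_pi2_pcore_neq1 (gT : finGroupType) (G : {group gT}) (a b : nat) :
    solvable G -> G :!=: 1 ->
    (forall q, q \in \pi(#|G|) -> (q == a) || (q == b)) ->
  'O_b(G) = 1 -> 'O_a(G) != 1.
Proof.
move=> solG ntG piG Ob1.
have [M [sMG nsMG ntM /is_abelemP[q pr_q /abelem_pgroup qM]]] :=
  solvable_norm_abelem solG (normal_refl G) ntG.
have sMO := pcore_max qM nsMG.
have [_ qdM _] := pgroup_pdiv qM ntM.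
have : q \in \pi(#|G|).
  by rewrite mem_primes pr_q cardG_gt0 (dvdn_trans qdM (cardSg sMG)).
case/piG/orP => /eqP eq_q; rewrite eq_q in sMO.
  by apply: contraNneq ntM => Oa1; rewrite -subG1 -Oa1.
by rewrite Ob1 subG1 in sMO; rewrite sMO in ntM.
Qed.

Lemma der1_sub_cent_cyclic (gT : finGroupType) (G Z : {group gT}) :
  cyclic Z -> G \subset 'N(Z) -> G^`(1) \subset 'C_G(Z).
Proof.
move=> cycZ nZG.
rewrite subsetI der_sub /= -(ker_conj_aut Z) ker_trivg_morphim.
rewrite (subset_trans (der_sub 1 G) nZG) /= morphim_der //.
have abGZ : abelian (conj_aut Z @* G).
  exact: abelianS (Aut_conj_aut _ _) (Aut_cyclic_abelian cycZ).
by rewrite (derG1P abGZ).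
Qed.

Lemma pi2_p'group_pgroup (gT : finGroupType) (G X : {group gT}) (a b : nat) :
    (forall q, q \in \pi(#|G|) -> (q == a) || (q == b)) ->
  X \subset G -> a^'.-group X -> b.-group X.
Proof.
move=> piG sXG; apply: sub_in_pnat => q /(pi_of_dvd (cardSg sXG) (cardG_gt0 G)).
by rewrite !inE => /piG/orP[->|].
Qed.

Section TwoPrimeGroup.

Variables (gT : finGroupType) (H : {group gT}) (a b : nat).
Hypotheses (pr_a : prime a) (pr_b : prime b) (neq_ab : a != b).
Hypothesis piH : forall q, q \in \pi(#|H|) -> (q == a) || (q == b).
Hypothesis aH : a %| #|H|.
Hypothesis solH : solvable H.
Hypothesis not_ab_order : {in H, forall x, #[x] != (a * b)%N}.

Let neq_ba : b != a. Proof. by rewrite eq_sym. Qed.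
Let not_ba_order : {in H, forall x, #[x] != (b * a)%N}.
Proof. by move=> x Hx; rewrite mulnC not_ab_order. Qed.

Let piH_ba q : q \in \pi(#|H|) -> (q == b) || (q == a).
Proof. by move/piH; rewrite orbC. Qed.

Let P := 'O_b(H)%G.
Let K := 'O_{b, a}(H)%G.
Let nsPH : P <| H. Proof. exact: pcore_normal. Qed.
Let nsKH : K <| H. Proof. exact: pseries_normal. Qed.
Let bP : b.-group P. Proof. exact: pcore_pgroup. Qed.
Let sPK : P \subset K.
Proof. by rewrite /= -pseries1 (pseries_sub_catl [:: _] [:: _]). Qed.

Hypothesis ntP : P :!=: 1.

Lemma pseries_Frobenius :
  exists2 R : {group gT}, a.-Sylow(K) R & [Frobenius K = P ><| R].
Proof.
have [sPH nPH] := andP nsPH; have [sKH _] := andP nsKH.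
have defKP : K / P = 'O_a(H / P) := quotient_pseries2 b a H.
have aKP : a.-group (K / P) by rewrite defKP pcore_pgroup.
have ntHP : H / P != 1.
  rewrite -subG1 quotient_sub1 //; apply: contraL aH => /pgroupS/(_ bP) bH.
  by apply/negP => /pnat_dvd/(_ bH); rewrite pnatE // inE (negbTE neq_ab).
have ntKP : K / P != 1.
  rewrite defKP; apply: solvable_pi2_pcore_neq1 (trivg_pcore_quotient _ _).
  - exact: quotient_sol.
  - exact: ntHP.
  move=> q /(pi_of_dvd _ (cardG_gt0 H)) piHq; apply/piH/piHq.
  by rewrite card_quotient // dvdn_indexg.
have nsPK : P <| K := normalS sPK sKH nsPH.
have hallP : Hall K P.
  rewrite /Hall sPK -card_quotient ?normal_norm //=.
  by rewrite (pnat_coprime bP) // (pi_p'nat aKP) // inE.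
have [R /complP[tiPR defPR]] := splitsP (SchurZassenhaus_split hallP nsPK).
have sRK : R \subset K by rewrite -defPR mulG_subr.
have sRH := subset_trans sRK sKH.
have defK : P ><| R = K by rewrite sdprodE // (subset_trans sRH nPH).
have oR : #|R| = #|K / P|.
  by rewrite card_quotient ?normal_norm -?(index_sdprod defK).
have aR : a.-group R by rewrite /pgroup oR.
exists R.
  have iKR : #|K : R| = #|P| by rewrite -divgS // -(sdprod_card defK) mulnK.
  by rewrite /pHall sRK aR iKR (pi_p'nat bP) // inE.
apply/Frobenius_semiregularP => //; first by rewrite -cardG_gt1 oR cardG_gt1.
apply/semiregular_sym.
exact: (pgroups_semiregular pr_a pr_b neq_ab not_ab_order sRH sPH aR bP).
Qed.

Section ComplementNormaliser.

Variable R : {group gT}.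
Hypotheses (sylR : a.-Sylow(K) R) (frobK : [Frobenius K = P ><| R]).

Let L := 'N_H(R)%G.
Let defK : P ><| R = K. Proof. by have [] := Frobenius_context frobK. Qed.
Let aR : a.-group R. Proof. exact: pHall_pgroup sylR. Qed.
Let ntR : R :!=: 1. Proof. by have [] := Frobenius_context frobK. Qed.
Let sRH : R \subset H.
Proof. exact: subset_trans (pHall_sub sylR) (normal_sub nsKH). Qed.
Let sRL : R \subset L. Proof. by rewrite subsetI sRH normG. Qed.
Let nsRL : R <| L. Proof. by rewrite /normal sRL subsetIr. Qed.

Lemma pcore_sdprod_norm : P ><| L = H.
Proof.
have [sPH nPH] := andP nsPH.
have [_ _ defPR nPR tiPR] := sdprod_context defK.
have defPL : P * L = H.
  by rewrite -{1}(Frattini_arg nsKH sylR) -defPR -mulgA (mulSGid sRL).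
rewrite sdprodE ?(subset_trans (subsetIl _ _) nPH) //.
have sPLP : P :&: L \subset P := subsetIl _ _.
have cPLR : P :&: L \subset 'C(R).
  apply/commG1P/trivgP; rewrite -tiPR commg_subI ?setIS ?subsetIr //.
  by rewrite subsetI subxx (subset_trans sRH nPH).
have [] // := cent_pgroups_trivg pr_b pr_a neq_ba not_ba_order
  (subset_trans sPLP sPH) sRH (pgroupS sPLP bP) aR cPLR.
by move/eqP; rewrite (negbTE ntR).
Qed.

Let defPL : P * L = H. Proof. exact: sdprodW pcore_sdprod_norm. Qed.

Lemma cyclic_center_compl : cyclic 'Z(R).
Proof.
have sZR : 'Z(R) \subset R := center_sub R.
apply: (abelian_norm_pgroup_cyclic pr_a pr_b neq_ab not_ab_order _
  (normal_sub nsPH)) (center_abelian R) (pgroupS sZR aR) bP ntP _.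
- exact: subset_trans sZR sRH.
- exact: subset_trans sZR (subset_trans sRH (normal_norm nsPH)).
Qed.

Lemma cent_center_compl_pgroup : a.-group 'C_L('Z(R)).
Proof.
have sCH : 'C_L('Z(R)) \subset H := subset_trans (subsetIl _ _) (subsetIl _ _).
apply/(pi2_p'group_pgroup piH_ba sCH).
have [S sylS] := Sylow_exists b 'C_L('Z(R)).
have [sSC bS _] := and3P sylS.
have sZR : 'Z(R) \subset R := center_sub R.
have [S1 | Z1] := cent_pgroups_trivg pr_b pr_a neq_ba not_ba_order
  (subset_trans sSC sCH) (subset_trans sZR sRH) bS (pgroupS sZR aR)
  (subset_trans sSC (subsetIr _ _)).
  by move: sylS; rewrite /pHall S1 indexg1 => /and3P[].
by move: ntR; rewrite -(center_nil_eq1 (pgroup_nil aR)) Z1 eqxx.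
Qed.

(* The Sylow subgroup T of L contains L' and is thus normal, so P <*> T is a
   normal subgroup of H with P <*> T / P an a-group, forcing T \subset K. *)
Lemma Sylow_norm_compl : a.-Sylow(L) R.
Proof.
have nZL : L \subset 'N('Z(R)) := char_norm_trans (center_char R) (subsetIr _ _).
have nsCL : 'C_L('Z(R)) <| L by rewrite -{2}(setIidPl nZL) subcent_normal.
have [T sylT] := Sylow_exists a L; have [sTL aT _] := and3P sylT.
have sCT : 'C_L('Z(R)) \subset T.
  exact: subset_trans (pcore_max cent_center_compl_pgroup nsCL) (pcore_sub_Hall sylT).
have sRT := subset_trans (pcore_max aR nsRL) (pcore_sub_Hall sylT).
have nsTL : T <| L.
  apply: sub_der1_normal sTL.
  exact: subset_trans (der1_sub_cent_cyclic cyclic_center_compl nZL) sCT.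
have [sPH nPH] := andP nsPH.
have nPT : T \subset 'N(P) := subset_trans sTL (subset_trans (subsetIl _ _) nPH).
have nsPTH : P <*> T <| H.
  rewrite /normal join_subG sPH (subset_trans sTL (subsetIl _ _)) /= -{1}defPL.
  rewrite mul_subG //; first exact: subset_trans (joing_subl _ _) (normG _).
  by rewrite normsY ?(normal_norm nsTL) ?(subset_trans (subsetIl _ _) nPH).
have sPTK : P <*> T \subset K.
  have nPPT : P <*> T \subset 'N(P) by rewrite join_subG normG.
  rewrite -(quotientSGK nPPT sPK) quotient_pseries2 pcore_max //.
    by rewrite /= quotientYidl // quotient_pgroup.
  exact: quotient_normal.
by rewrite -(sub_pHall sylR aT sRT (subset_trans (joing_subr _ _) sPTK)).
Qed.

Lemma quotient_pcore_Frobenius :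
    L :!=: R ->
  exists2 S : {group gT}, b.-group S & [Frobenius H / P = (K / P) ><| (S / P)].
Proof.
move=> neLR; have sylRL := Sylow_norm_compl.
have [_ _ a'LR] := and3P sylRL.
have hallR : Hall L R by rewrite /Hall sRL (pnat_coprime aR a'LR).
have [S /complP[tiRS defRS]] := splitsP (SchurZassenhaus_split hallR nsRL).
have sSL : S \subset L by rewrite -defRS mulG_subr.
have sSH : S \subset H := subset_trans sSL (subsetIl _ _).
have defL : R ><| S = L by rewrite sdprodE // (subset_trans sSL (subsetIr _ _)).
have bS : b.-group S.
  by apply: pi2_p'group_pgroup piH sSH _; rewrite /pgroup (index_sdprod defL).
have ntS : S :!=: 1 by apply: contraNneq neLR => S1; rewrite -defRS S1 mulg1.
have frobL : [Frobenius L = R ><| S].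
  apply/Frobenius_semiregularP => //.
  exact: (pgroups_semiregular pr_a pr_b neq_ab not_ab_order sRH sSH aR bS).
have [_ _ _ nPL tiPL] := sdprod_context pcore_sdprod_norm.
have injP : 'injm (restrm nPL (coset P)).
  by rewrite ker_restrm ker_coset setIC tiPL.
have := injm_Frobenius (subxx L) injP frobL.
rewrite !morphim_restrm setIid (setIidPr sRL) (setIidPr sSL).
have [_ _ defPR _ _] := sdprod_context defK.
move=> frobLP; have : [Frobenius L / P = (R / P) ><| (S / P)] := frobLP.
by rewrite -(quotientMidl P R) defPR -(quotientMidl P L) defPL; exists S.
Qed.

End ComplementNormaliser.

Lemma pcore_Frobenius_types :
  Frobenius_of_type H a b \/ two_Frobenius_of_type H b a b.
Proof.
have [R sylR frobK] := pseries_Frobenius.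
have [defK _ _ _ _] := Frobenius_context frobK.
have [eqLR | neLR] := eqVneq 'N_H(R) R.
  have eqKH : K :=: H.
    by rewrite -(sdprodW defK) -(sdprodW (pcore_sdprod_norm sylR frobK)) /= eqLR.
  left; exists P, R; rewrite -eqKH; split=> //; exact: pHall_pgroup sylR.
have [S bS frobHP] := quotient_pcore_Frobenius sylR frobK neLR.
right; exists P, K; split=> //.
  exists (S / P)%G; split=> //; first exact: quotient_pgroup.
  by rewrite quotient_pseries2 pcore_pgroup.
by exists R; split=> //; exact: pHall_pgroup sylR.
Qed.

End TwoPrimeGroup.

Lemma cpg_adj_order (gT : finGroupType) (G : {set gT}) (p q : nat) :
  cpg_adj G p q -> {in G, forall x, #[x] != (p * q)%N}.
Proof. by case=> _ _ _ no_pq x Gx; apply/eqP => ox; apply: no_pq; exists x. Qed.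

Lemma pi2_solvable (gT : finGroupType) (G : {group gT}) (p q : nat) :
  (forall s, (s \in \pi(#|G|)) = (s == p) || (s == q)) -> solvable G.
Proof.
move=> piG; apply: Burnside_p_a_q_b.
apply: (@uniq_leq_size _ _ [:: p; q]) => [|s]; first exact: primes_uniq.
by rewrite -[s \in primes _]/(s \in \pi(#|G|)) piG !inE.
Qed.

Lemma pi2_pcore_cases (gT : finGroupType) (G : {group gT}) (a b : nat) :
    prime a -> (forall q, (q \in \pi(#|G|)) = (q == a) || (q == b)) ->
  'O_b(G) != 1 \/ 'O_a(G) != 1.
Proof.
move=> pr_a piG; have [Ob1 | ntOb] := eqVneq 'O_b(G) 1; last by left.
right; apply: solvable_pi2_pcore_neq1 (pi2_solvable piG) _ _ Ob1 => [|q].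
  have := piG a; rewrite eqxx mem_primes => /and3P[_ _ aG].
  by apply: contraTneq aG => ->; rewrite cards1 dvdn1; case: eqP pr_a => // ->.
by rewrite piG.
Qed.

Lemma pi2_Frobenius_types (gT : finGroupType) (G : {group gT}) (a b : nat) :
    prime a -> prime b -> a != b ->
    (forall q, (q \in \pi(#|G|)) = (q == a) || (q == b)) ->
    {in G, forall x, #[x] != (a * b)%N} -> 'O_b(G) != 1 ->
  Frobenius_of_type G a b \/ two_Frobenius_of_type G b a b.
Proof.
move=> pr_a pr_b neq_ab piG.
apply: (pcore_Frobenius_types pr_a pr_b neq_ab) => [q | | ]; first by rewrite piG.
  by have := piG a; rewrite eqxx mem_primes => /and3P[].
exact: pi2_solvable piG.
Qed.

Lemma Frobenius_of_typeW (gT : finGroupType) (G : {group gT}) p q :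
  Frobenius_of_type G p q -> [Frobenius G].
Proof. by case=> K [U [frobG _ _]]; apply: FrobeniusW frobG. Qed.

Lemma two_Frobenius_of_typeW (gT : finGroupType) (G : {group gT}) p q r :
  two_Frobenius_of_type G p q r -> two_Frobenius G.
Proof.
case=> F1 [F2 [nsF1G nsF2G [U [frobU _ _]] [W [frobW _ _]]]].
exists F1, F2; split=> //; first exact: FrobeniusWker frobU.
exact: FrobeniusWker frobW.
Qed.

Theorem lemma1p1 (gT : finGroupType) (H : {group gT}) (r p : nat) :
  prime r -> prime p -> r != p ->
  (forall q, (q \in \pi(#|H|)) = (q == r) || (q == p)) ->
  cpg_adj H r p ->
  [/\ [Frobenius H] \/ two_Frobenius H,
      (exists P : {group gT}, [/\ P <| H, p.-group P & P :!=: 1]) ->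
        Frobenius_of_type H r p \/ two_Frobenius_of_type H p r p,
      (exists N : {group gT}, [/\ N <| H, r.-group (H / N) & H / N :!=: 1]) ->
        Frobenius_of_type H r p \/ two_Frobenius_of_type H r p r &
      (exists P : {group gT}, [/\ P <| H, p.-group P & P :!=: 1]) ->
      (exists N : {group gT}, [/\ N <| H, r.-group (H / N) & H / N :!=: 1]) ->
        Frobenius_of_type H r p].
Proof.
move=> pr_r pr_p neq_rp piH /cpg_adj_order not_rp_order.
have neq_pr : p != r by rewrite eq_sym.
have piH_pr q : (q \in \pi(#|H|)) = (q == p) || (q == r) by rewrite piH orbC.
have not_pr_order : {in H, forall x, #[x] != (p * r)%N}.
  by move=> x /not_rp_order; rewrite mulnC.
have types_rp := pi2_Frobenius_types pr_r pr_p neq_rp piH not_rp_order.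
have types_pr := pi2_Frobenius_types pr_p pr_r neq_pr piH_pr not_pr_order.
have Op_neq1 : (exists P : {group gT}, [/\ P <| H, p.-group P & P :!=: 1]) ->
    'O_p(H) != 1.
  by case=> P [nsPH pP]; apply: contraNneq => Op1; rewrite -subG1 -Op1 pcore_max.
have no_rquotient (N : {group gT}) : N <| H -> r.-group (H / N) -> H / N :!=: 1 ->
    ~ (Frobenius_of_type H p r \/ two_Frobenius_of_type H p r p).
  move=> nsNH rHN /eqP ntHN.
  have p'HN : p^'.-group (H / N) by apply: pi_p'nat rHN _; rewrite !inE eq_sym.
  case=> [/Frobenius_of_type_p'quotient | /two_Frobenius_of_type_p'quotient] quo1;
    exact/ntHN/quo1.
split.
- case: (pi2_pcore_cases pr_r piH) => [/types_rp | /types_pr]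
    [/Frobenius_of_typeW | /two_Frobenius_of_typeW]; by [left | right].
- by move/Op_neq1/types_rp.
- case=> N [nsNH rHN ntHN].
  case: (pi2_pcore_cases pr_r piH) => [/types_rp | /types_pr].
    by case=> F; [left | case: (no_rquotient N nsNH rHN ntHN); right].
  by case=> F; [case: (no_rquotient N nsNH rHN ntHN); left | right].
move/Op_neq1/types_rp => [// | F [N [nsNH rHN ntHN]]].
by case: (no_rquotient N nsNH rHN ntHN); right.
Qed.
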